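(* Let $f:\mathbb{R}^n \to \mathbb{R}$ be $\alpha$-strongly convex. Let $C_1,\dots,C_m\subset\mathbb{R}^n$ be closed convex sets with nonempty intersection $C=\bigcap_{i=1}^m C_i$, let $I=\{1,\dots,m\}=I_C\cup I_Q$ (disjoint) where for each $i\in I_Q$, $C_i=\{x\in\mathbb{R}^n : A_i x\in Q_i\}$ with $A_i\in\mathbb{R}^{m_i\times n}$ and $Q_i\subset\mathbb{R}^{m_i}$ nonempty closed convex. Assume that the collection $\{C_1,\dots,C_m\}$ is boundedly linearly regular and that for each $i\in I_Q$ the collection $\{Q_i,\mathcal{R}(A_i)\}$ is boundedly linearly regular. Run the algorithm RBPSFP described in the context with arbitrary starting points $x_0\in\mathbb{R}^n$, $x_0^*\in\partial f(x_0)$ and probabilities $p_i>0$. Then (for every realization of the random indices) the iterates $x_k$ and $x_k^*$ remain bounded and \[ \operatorname{dist}_f^{x_{k+1}^*}(x_{k+1},C) \le \operatorname{dist}_f^{x_k^*}(x_k,C)\quad\text{for all }k; \] moreover $\mathbb{E}\big[\operatorname{dist}_f^{x_k^*}(x_k,C)^2\big]\to 0$, where the expectation is with respect to the random choice of indices, and there is a constant $c>0$ such that \[ \mathbb{E}\left[\operatorname{dist}(x_k,C)\right] \le \frac{c}{\sqrt{k}}\quad\text{for all } k\ge 1. \]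
   Context: $f$ is $\alpha$-strongly convex ($\alpha>0$) if $f(y)\ge f(x)+\langle x^*,y-x\rangle+\frac{\alpha}{2}\|y-x\|_2^2$ for all $x,y$, $x^*\in\partial f(x)$. Its conjugate $f^*(x^* )=\sup_x\langle x^*,x\rangle-f(x)$ is then differentiable. Bregman distance: $D_f^{x^*}(x,y)=f(y)-f(x)-\langle x^*,y-x\rangle$ for $x^*\in\partial f(x)$. For a nonempty closed convex $D$, the Bregman projection $\Pi_D^{x^*}(x)$ is the unique minimizer of $y\mapsto D_f^{x^*}(x,y)$ over $D$, and $\operatorname{dist}_f^{x^*}(x,D)^2$ is the minimal value; a subgradient $\hat x^*\in\partial f(\hat x)$ at $\hat x=\Pi_D^{x^*}(x)$ is admissible if $\langle\hat x^*-x^*,y-\hat x\rangle\ge0$ for all $y\in D$ (one always exists). $\operatorname{dist}$ is Euclidean distance, $P_Q$ orthogonal projection onto $Q$, $\mathcal{R}(A)$ the range. A collection of closed convex sets with nonempty intersection $D=\bigcap_{j=1}^r D_j$ is boundedly linearly regular if for every $R>0$ there is $\gamma>0$ with $\operatorname{dist}(x,D)^2\le\gamma\sum_j\operatorname{dist}(x,D_j)^2$ whenever $\|x\|_2\le R$. Algorithm RBPSFP: given $x_0$, $x_0^*\in\partial f(x_0)$ and probabilities $p_i>0$ ($\sum_{i\in I}p_i=1$), for $k=0,1,2,\dots$ choose $i_k\in I$ independently at random with $P(i_k=i)=p_i$. If $i_k\in I_C$: set $x_{k+1}=\Pi_{C_{i_k}}^{x_k^*}(x_k)$ and let $x_{k+1}^*$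 be an admissible subgradient. If $i_k\in I_Q$: set $w_k=A_{i_k}x_k-P_{Q_{i_k}}(A_{i_k}x_k)$, $\beta_k=\langle A_{i_k}^Tw_k,x_k\rangle-\|w_k\|_2^2$, and $x_{k+1}=\Pi_{H_k}^{x_k^*}(x_k)$ with $H_k=\{x:\langle A_{i_k}^Tw_k,x\rangle\le\beta_k\}$, together with $x_{k+1}^*=x_k^*-t_kA_{i_k}^Tw_k$, where $t_k$ minimizes $t\mapsto f^*(x_k^*-tA_{i_k}^Tw_k)+t\beta_k$ over $t\in\mathbb{R}$ (so that $x_{k+1}=\nabla f^*(x_{k+1}^* )$); if $w_k=0$ then $x_{k+1}=x_k$, $x_{k+1}^*=x_k^*$. *)

From HB Require Import structures.
From mathcomp Require Import all_boot all_order all_algebra.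
From mathcomp Require Import all_classical all_reals all_analysis.
Set Implicit Arguments. Unset Strict Implicit. Unset Printing Implicit Defensive.
Import Order.TTheory GRing.Theory Num.Theory.
Import numFieldNormedType.Exports.
Local Open Scope classical_set_scope.
Local Open Scope ring_scope.

Section Defs.
Variable R : realType.

Definition dotv (k : nat) (u v : 'cV[R]_k) : R := \sum_(j < k) u j 0 * v j 0.
Definition enorm (k : nat) (u : 'cV[R]_k) : R := Num.sqrt (dotv u u).

Definition euc_dist (k : nat) (x : 'cV[R]_k) (D : set 'cV[R]_k) : R :=
  inf [set r | exists2 y, D y & r = enorm (x - y)].

Definition cvx_set (k : nat) (D : set 'cV[R]_k) : Prop :=
  forall x y t, D x -> D y -> 0 <= t <= 1 -> D (t *: x + (1 - t) *: y).

Definition is_orth_proj (k : nat) (D : set 'cV[R]_k) (x p : 'cV[R]_k) : Prop :=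
  D p /\ forall y, D y -> enorm (x - p) <= enorm (x - y).

Definition mxrange (k n : nat) (A : 'M[R]_(k, n)) : set 'cV[R]_k :=
  [set y | exists x, y = A *m x].

Definition bdd_lin_regular (k : nat) (J : finType) (D : J -> set 'cV[R]_k) : Prop :=
  forall rho : R, 0 < rho -> exists2 gamma : R, 0 < gamma &
    forall x, enorm x <= rho ->
      euc_dist x [set y | forall j, D j y] ^+ 2 <= gamma * \sum_(j : J) euc_dist x (D j) ^+ 2.

Variable n : nat.
Implicit Types (f : 'cV[R]_n -> R) (x y xs : 'cV[R]_n) (D : set 'cV[R]_n).

Definition subgrad f x xs : Prop := forall y, f x + dotv xs (y - x) <= f y.

Definition convex_fun f : Prop :=
  forall x y (t : R), 0 <= t <= 1 -> f (t *: x + (1 - t) *: y) <= t * f x + (1 - t) * f y.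

Definition strongly_convex (alpha : R) f : Prop :=
  convex_fun f /\
  forall x y xs, subgrad f x xs ->
    f x + dotv xs (y - x) + alpha / 2 * enorm (y - x) ^+ 2 <= f y.

Definition fconj f (xs : 'cV[R]_n) : R :=
  sup [set r | exists x, r = dotv xs x - f x].

Definition bregman f xs x y : R := f y - f x - dotv xs (y - x).

Definition is_bproj f xs x D y : Prop :=
  D y /\ forall z, D z -> bregman f xs x y <= bregman f xs x z.

Definition bdist f xs x D : R :=
  Num.sqrt (inf [set r | exists2 y, D y & r = bregman f xs x y]).

Definition admissible f xs D y ys : Prop :=
  subgrad f y ys /\ forall z, D z -> 0 <= dotv (ys - xs) (z - y).

End Defs.

Definition rbpsfp_step (R : realType) (n m : nat) (f : 'cV[R]_n -> R)
  (isQ : 'I_m -> bool) (C : 'I_m -> set 'cV[R]_n) (mi : 'I_m -> nat)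
  (A : forall i, 'M[R]_(mi i, n)) (Q : forall i, set 'cV[R]_(mi i))
  (i : 'I_m) (x xs x' xs' : 'cV[R]_n) : Prop :=
  if ~~ isQ i then
    is_bproj f xs x (C i) x' /\ admissible f xs (C i) x' xs'
  else
    exists2 p : 'cV[R]_(mi i), is_orth_proj (Q i) (A i *m x) p &
      let w := A i *m x - p in
      (w = 0 -> x' = x /\ xs' = xs) /\
      (w <> 0 ->
        let a := (A i)^T *m w in
        let beta := dotv a x - enorm w ^+ 2 in
        let H := [set z | dotv a z <= beta] in
        is_bproj f xs x H x' /\
        exists2 t : R, xs' = xs - t *: a &
          forall s : R, fconj f (xs - t *: a) + t * beta <= fconj f (xs - s *: a) + s * beta).

(* Expectation over the first k random indices (i.i.d. with law p) of a
   function of the history of indices. *)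
Definition expect_hist (R : realType) (m : nat) (p : 'I_m -> R) (k : nat)
  (g : seq 'I_m -> R) : R :=
  \sum_(h : k.-tuple 'I_m) (\prod_(j < k) p (tnth h j)) * g (tval h).

(* One step never increases the Bregman distance to a point [z] of [C]: by the three-point
   identity, D_f^{x*_(k+1)}(x_(k+1), z) <= D_f^{x*_k}(x_k, z) - D_f^{x*_k}(x_k, x_(k+1)).
   For a step onto [C_i] this is admissibility of [x*_(k+1)]; for a halfspace step, [C_i]
   lies in [H_k] and the dual update [x*_k - t_k a_k] is a subgradient at [x_(k+1)] with
   [t_k >= 0], [t_k] being a Lagrange multiplier of the projection onto [H_k]. Strong convexity
   turns this into monotonicity of [dist_f] and boundedness of the iterates.
   Bounded linear regularity of [{Q_i, R(A_i)}] bounds [dist(x_k, C_i)] by a multiple of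
   [|x_k - x_(k+1)|], and that of [{C_i}] bounds [dist(x_k, C)^2] by the sum over [i], so
   averaging over the random index gives [E d_(k+1) <= E d_k - c E dist(x_k, C)^2] for
   [d_k = dist_f(x_k, C)^2]. Since [d_k <= L dist(x_k, C)] on bounded sets, Jensen's inequality
   yields [a_(k+1) <= a_k - c' a_k^2] for [a_k = E d_k]; hence [a_k = O(1/k)], and
   [dist^2 <= (2/alpha) d_k] gives [E dist(x_k, C) = O(1/sqrt k)]. *)

From HB Require Import structures.
From mathcomp Require Import all_boot all_order all_algebra.
From mathcomp Require Import all_classical all_reals all_analysis.
From mathcomp Require Import ring lra.
Set Implicit Arguments. Unset Strict Implicit. Unset Printing Implicit Defensive.
Import Order.TTheory GRing.Theory Num.Theory.
Import numFieldNormedType.Exports.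
Local Open Scope classical_set_scope.
Local Open Scope ring_scope.

Section EuclideanGeometry.
Variables (R : realType) (k : nat).
Implicit Types (u v w : 'cV[R]_k) (D : set 'cV[R]_k).

Lemma dotvC u v : dotv u v = dotv v u.
Proof. by apply: eq_bigr => j _; rewrite mulrC. Qed.

Lemma dotvDl u v w : dotv (u + v) w = dotv u w + dotv v w.
Proof. by rewrite /dotv -big_split; apply: eq_bigr => j _; rewrite !mxE mulrDl. Qed.

Lemma dotvDr u v w : dotv w (u + v) = dotv w u + dotv w v.
Proof. by rewrite dotvC dotvDl !(dotvC w). Qed.

Lemma dotvZl a u v : dotv (a *: u) v = a * dotv u v.
Proof. by rewrite /dotv mulr_sumr; apply: eq_bigr => j _; rewrite !mxE mulrA. Qed.

Lemma dotvZr a u v : dotv u (a *: v) = a * dotv u v.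
Proof. by rewrite dotvC dotvZl dotvC. Qed.

Lemma dotvNl u v : dotv (- u) v = - dotv u v.
Proof. by rewrite -scaleN1r dotvZl mulN1r. Qed.

Lemma dotvNr u v : dotv u (- v) = - dotv u v.
Proof. by rewrite dotvC dotvNl dotvC. Qed.

Lemma dotvBl u v w : dotv (u - v) w = dotv u w - dotv v w.
Proof. by rewrite dotvDl dotvNl. Qed.

Lemma dotvBr u v w : dotv w (u - v) = dotv w u - dotv w v.
Proof. by rewrite dotvDr dotvNr. Qed.

Lemma dotv0l v : dotv 0 v = 0.
Proof. by rewrite -(scale0r 0) dotvZl mul0r. Qed.

Lemma dotv0r v : dotv v 0 = 0.
Proof. by rewrite dotvC dotv0l. Qed.

Lemma dotvv_ge0 u : 0 <= dotv u u.
Proof. by apply: sumr_ge0 => j _; rewrite -expr2 sqr_ge0. Qed.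

Lemma dotvv_eq0 u : (dotv u u == 0) = (u == 0).
Proof.
apply/idP/eqP => [|->]; last by rewrite dotv0l.
rewrite psumr_eq0 => [/allP u0|j _]; last by rewrite -expr2 sqr_ge0.
apply/matrixP => i j; rewrite ord1 mxE.
by have /implyP/(_ isT) := u0 i (mem_index_enum _); rewrite -expr2 sqrf_eq0 => /eqP.
Qed.

Lemma dotvv_gt0 u : u != 0 -> 0 < dotv u u.
Proof. by move=> u0; rewrite lt_def dotvv_eq0 u0 dotvv_ge0. Qed.

Lemma enorm_ge0 u : 0 <= enorm u.
Proof. exact: sqrtr_ge0. Qed.

Lemma enorm_sqr u : enorm u ^+ 2 = dotv u u.
Proof. by rewrite sqr_sqrtr // dotvv_ge0. Qed.

Lemma enorm_eq0 u : (enorm u == 0) = (u == 0).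
Proof. by rewrite sqrtr_eq0 le_eqVlt ltNge dotvv_ge0 orbF dotvv_eq0. Qed.

Lemma enorm_gt0 u : u != 0 -> 0 < enorm u.
Proof. by move=> u0; rewrite lt_def enorm_eq0 u0 enorm_ge0. Qed.

Lemma enorm0 : enorm (0 : 'cV[R]_k) = 0.
Proof. by apply/eqP; rewrite enorm_eq0. Qed.

Lemma ler_enorm_sqr u v : enorm u <= enorm v -> dotv u u <= dotv v v.
Proof. by rewrite -!enorm_sqr ler_pXn2r ?nnegrE ?enorm_ge0. Qed.

Lemma dotv_sqr_le u v : dotv u v ^+ 2 <= dotv u u * dotv v v.
Proof.
have [/eqP|v0] := eqVneq (dotv v v) 0.
  by rewrite dotvv_eq0 => /eqP ->; rewrite dotv0r dotv0l expr0n /= mulr0.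
set t := dotv u v / dotv v v.
have := dotvv_ge0 (u - t *: v).
have -> : dotv (u - t *: v) (u - t *: v) = dotv u u - dotv u v ^+ 2 / dotv v v.
  by rewrite !(dotvBl, dotvBr, dotvZl, dotvZr) (dotvC v u) /t; field.
by rewrite subr_ge0 ler_pdivrMr // lt_def v0 dotvv_ge0.
Qed.

Lemma dotv_le u v : dotv u v <= enorm u * enorm v.
Proof.
have [uv0|uv_gt0] := leP (dotv u v) 0.
  by apply: le_trans uv0 _; rewrite mulr_ge0 ?enorm_ge0.
rewrite -(ger0_norm (ltW uv_gt0)) -sqrtr_sqr -sqrtrM ?dotvv_ge0 //.
by rewrite ler_sqrt ?mulr_ge0 ?dotvv_ge0 ?dotv_sqr_le.
Qed.

Lemma enormN u : enorm (- u) = enorm u.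
Proof. by rewrite /enorm dotvNl dotvNr opprK. Qed.

Lemma enorm_distC u v : enorm (u - v) = enorm (v - u).
Proof. by rewrite -enormN opprB. Qed.

Lemma normr_dotv_le u v : `|dotv u v| <= enorm u * enorm v.
Proof.
rewrite ler_norml dotv_le andbT lerNl -dotvNl.
by apply: le_trans (dotv_le _ _) _; rewrite enormN.
Qed.

Lemma enormZ a u : enorm (a *: u) = `|a| * enorm u.
Proof.
by rewrite /enorm dotvZl dotvZr mulrA -expr2 sqrtrM ?sqr_ge0 // sqrtr_sqr.
Qed.

Lemma ler_enormD u v : enorm (u + v) <= enorm u + enorm v.
Proof.
rewrite -(@ler_pXn2r _ 2) ?nnegrE ?addr_ge0 ?enorm_ge0 //.
rewrite enorm_sqr sqrrD !enorm_sqr dotvDl !dotvDr (dotvC v u).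
have := dotv_le u v; lra.
Qed.

Lemma normr_coord_le u j : `|u j 0| <= enorm u.
Proof.
rewrite -sqrtr_sqr ler_sqrt ?dotvv_ge0 // /dotv (bigD1 j) //= -expr2 lerDl.
by apply: sumr_ge0 => i _; rewrite -expr2 sqr_ge0.
Qed.

Lemma euc_dist_le D y z : D z -> euc_dist y D <= enorm (y - z).
Proof.
move=> Dz; apply: ge_inf; last by exists z.
by exists 0 => _ [w _ ->]; apply: enorm_ge0.
Qed.

Lemma euc_dist_ge0 D y : 0 <= euc_dist y D.
Proof.
have [[z Dz]|D0] := pselect (D !=set0).
  apply: lb_le_inf => [|_ [w _ ->]]; last exact: enorm_ge0.
  by exists (enorm (y - z)); exists z.
rewrite /euc_dist; suff -> : [set r | exists2 z, D z & r = enorm (y - z)] = set0.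
  by rewrite inf0.
by apply/seteqP; split => // r [z Dz _]; apply: D0; exists z.
Qed.

Lemma euc_dist_eq0 D y : D y -> euc_dist y D = 0.
Proof.
move=> Dy; apply/eqP; rewrite eq_le euc_dist_ge0 andbT.
by apply: le_trans (euc_dist_le _ Dy) _; rewrite subrr enorm0.
Qed.

Lemma euc_dist_approx D y e : D !=set0 -> 0 < e ->
  exists2 z, D z & enorm (y - z) < euc_dist y D + e.
Proof.
move=> [z0 Dz0] e_gt0.
have S_ne : [set r | exists2 z, D z & r = enorm (y - z)] !=set0.
  by exists (enorm (y - z0)); exists z0.
have lt_inf : euc_dist y D < euc_dist y D + e by rewrite ltrDl.
by have [_ [z Dz ->]] := inf_lt S_ne lt_inf; exists z.
Qed.

Lemma euc_dist_orth_proj D y p : is_orth_proj D y p -> euc_dist y D = enorm (y - p).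
Proof.
move=> [Dp p_min]; apply/eqP; rewrite eq_le euc_dist_le //=.
by apply: lb_le_inf => [|_ [z Dz ->]]; [exists (enorm (y - p)); exists p|apply: p_min].
Qed.

Lemma orth_proj_obtuse D y p q : cvx_set D -> is_orth_proj D y p -> D q ->
  dotv (y - p) (q - p) <= 0.
Proof.
move=> cvxD [Dp p_min] Dq; rewrite leNgt; apply/negP => c_gt0.
set c := dotv (y - p) (q - p) in c_gt0.
set d := dotv (q - p) (q - p).
have d_ge0 : 0 <= d by apply: dotvv_ge0.
set s := c / (c + d).
have s_gt0 : 0 < s by rewrite divr_gt0 // ltr_wpDr.
have s_le1 : s <= 1 by rewrite ler_pdivrMr ?ltr_wpDr // mul1r lerDl.
have /p_min/ler_enorm_sqr : D (s *: q + (1 - s) *: p).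
  by apply: cvxD => //; rewrite (ltW s_gt0) s_le1.
have -> : y - (s *: q + (1 - s) *: p) = (y - p) - s *: (q - p).
  by apply/matrixP => i j; rewrite !mxE; ring.
have expand (a b : 'cV[R]_k) :
    dotv (a - s *: b) (a - s *: b) = dotv a a - 2 * s * dotv a b + s ^+ 2 * dotv b b.
  by rewrite !(dotvBl, dotvBr, dotvZl, dotvZr) (dotvC b); ring.
rewrite expand -/c -/d => le_yp.
have : s * (2 * c) <= s * (s * d) by nra.
rewrite ler_pM2l // /s mulrAC ler_pdivlMr ?ltr_wpDr //; nra.
Qed.

End EuclideanGeometry.

Section MatrixBounds.
Variable R : realType.

Lemma dotv_mulmx (k l : nat) (M : 'M[R]_(k, l)) x y :
  dotv (M *m x) y = dotv x (M^T *m y).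
Proof.
rewrite /dotv; under eq_bigr do rewrite !mxE big_distrl /=.
rewrite exchange_big /=; apply: eq_bigr => j _.
by rewrite !mxE big_distrr /=; apply: eq_bigr => i _; rewrite !mxE; ring.
Qed.

Lemma enorm_mulmx_bounded (k l : nat) (M : 'M[R]_(k, l)) :
  exists2 N : R, 0 <= N & forall v, enorm (M *m v) <= N * enorm v.
Proof.
exists (Num.sqrt (\sum_(i < k) dotv (row i M)^T (row i M)^T)); first exact: sqrtr_ge0.
move=> v; rewrite -sqrtrM; last by apply: sumr_ge0 => i _; apply: dotvv_ge0.
rewrite ler_sqrt; last by apply: mulr_ge0; [apply: sumr_ge0 => i _|]; apply: dotvv_ge0.
rewrite {1}/dotv mulr_suml; apply: ler_sum => i _.
have -> : (M *m v) i 0 = dotv (row i M)^T v.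
  by rewrite !mxE; apply: eq_bigr => j _; rewrite !mxE.
by rewrite -expr2 dotv_sqr_le.
Qed.

Lemma mulmx_trpinv (k l : nat) (M : 'M[R]_(k, l)) (u : 'cV[R]_l) :
  M *m ((pinvmx M^T)^T *m (M *m u)) = M *m u.
Proof.
have /mulmxKpV/(congr1 trmx) : ((M *m u)^T <= M^T)%MS by rewrite trmx_mul submxMl.
by rewrite !trmx_mul !trmxK.
Qed.

End MatrixBounds.

Section ConvexFunctionBounds.
Variables (R : realType) (n : nat) (f : 'cV[R]_n -> R).
Hypothesis f_cvx : convex_fun f.
Implicit Type u : 'cV[R]_n.

Lemma convex_jensen_seq N (s : seq 'cV[R]_n) : size s = N.+1 ->
  f (N.+1%:R^-1 *: \sum_(v <- s) v) <= N.+1%:R^-1 * \sum_(v <- s) f v.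
Proof.
elim: N s => [|N IH] [|v s] //=.
  by case: s => // _; rewrite !big_cons !big_nil !addr0 invr1 scale1r mul1r.
case=> /IH f_s; rewrite !big_cons.
set M := (N.+2%:R : R); set K := (N.+1%:R : R) in f_s *.
have K_gt0 : 0 < K by rewrite ltr0n.
have MK : M = K + 1 by rewrite /M /K -natr1.
set t := M^-1.
have t01 : 0 <= t <= 1 by rewrite /t invr_ge0 MK invf_le1; lra.
have -> : t *: (v + \sum_(w <- s) w) = t *: v + (1 - t) *: (K^-1 *: \sum_(w <- s) w).
  apply/matrixP => i j; rewrite !mxE summxE ?mxE /t MK.
  by field; apply/andP; split; lra.
apply: le_trans (f_cvx _ _ t01) _.
have -> : 1 - t = K / M by rewrite /t MK; field; lra.
rewrite mulrDr lerD2l; apply: le_trans (_ : K / M * (K^-1 * \sum_(w <- s) f w) <= _).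
  by rewrite ler_wpM2l // divr_ge0 // MK; lra.
by rewrite mulrAC mulVKf ?gt_eqF // mulrC.
Qed.

Lemma convex_segment_bound u c s : 0 <= c -> `|s| <= c ->
  f (s *: u) <= `|f (c *: u)| + `|f ((- c) *: u)|.
Proof.
move=> c_ge0 s_le.
have [c0|c_neq0] := eqVneq c 0.
  move: s_le; rewrite c0 normr_le0 => /eqP ->; rewrite oppr0.
  by apply: le_trans (ler_norm _) _; rewrite lerDl.
have c_gt0 : 0 < c by rewrite lt_def c_neq0.
set th := (s + c) / (2 * c).
have th01 : 0 <= th <= 1.
  move: s_le; rewrite ler_norml => /andP[? ?].
  by rewrite /th divr_ge0 ?ler_pdivrMr ?mulr_gt0 //=; lra.
have -> : s *: u = th *: (c *: u) + (1 - th) *: ((- c) *: u).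
  by apply/matrixP => i j; rewrite !mxE /th; field; lra.
apply: le_trans (f_cvx _ _ th01) _.
have := ler_norm (f (c *: u)); have := ler_norm (f ((- c) *: u)).
have := normr_ge0 (f (c *: u)); have := normr_ge0 (f ((- c) *: u)).
case/andP: th01; nra.
Qed.

End ConvexFunctionBounds.

(* Write [y] as the average of the points [n y_j e_j] on the coordinate axes. *)
Lemma convex_bounded_above (R : realType) (n : nat) (f : 'cV[R]_n -> R) :
  convex_fun f -> forall r : R, exists B, forall y, enorm y <= r -> f y <= B.
Proof.
case: n f => [|N] g g_cvx r.
  by exists (g 0) => y _; rewrite (_ : y = 0) //; apply/matrixP => [[]].
pose e (j : 'I_N.+1) : 'cV[R]_N.+1 := delta_mx j 0.
pose c := N.+1%:R * `|r|.
pose B := \sum_(j < N.+1) (`|g (c *: e j)| + `|g ((- c) *: e j)|).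
exists B => y y_le.
pose s := [seq (N.+1%:R * y j 0) *: e j | j <- enum 'I_N.+1].
have -> : y = N.+1%:R^-1 *: \sum_(v <- s) v.
  rewrite big_map big_enum /= scaler_sumr {1}(matrix_sum_delta y).
  apply: eq_bigr => j _; rewrite big_ord1.
  by rewrite scalerA mulrA mulVf ?pnatr_eq0 // mul1r.
have size_s : size s = N.+1 by rewrite size_map size_enum_ord.
apply: le_trans (convex_jensen_seq g_cvx size_s) _.
rewrite big_map big_enum /= ler_pdivrMl ?ltr0n //.
rewrite (_ : _ * B = \sum_(j < N.+1) B); last by rewrite sumr_const card_ord mulr_natl.
apply: ler_sum => j _; apply: le_trans (_ : `|g (c *: e j)| + `|g ((- c) *: e j)| <= B).
  apply: (convex_segment_bound g_cvx); first by rewrite mulr_ge0.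
  rewrite normrM ger0_norm ?ler0n // ler_pM2l ?ltr0n //.
  exact: le_trans (normr_coord_le y j) (le_trans y_le (ler_norm r)).
rewrite /B (bigD1 j) //= lerDl; apply: sumr_ge0 => i _; exact: addr_ge0.
Qed.

Section SubgradientBounds.
Variables (R : realType) (n : nat) (f : 'cV[R]_n -> R).
Implicit Types (x y d : 'cV[R]_n).

Lemma subgrad_lower_bound x0 xs0 y : subgrad f x0 xs0 ->
  f x0 - enorm xs0 * (enorm y + enorm x0) <= f y.
Proof.
move=> sg0; have := sg0 y; have := normr_dotv_le xs0 (y - x0).
have : enorm (y - x0) <= enorm y + enorm x0 by rewrite -(enormN x0) ler_enormD.
move=> /(ler_wpM2l (enorm_ge0 xs0)); rewrite ler_norml; lra.
Qed.

Lemma subgrad_enorm_le x xs r B : subgrad f x xs -> enorm x <= r ->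
  (forall y, enorm y <= r + 1 -> f y <= B) -> enorm xs <= B - f x.
Proof.
move=> sg x_le f_le.
have fx_le : f x <= B by apply: f_le; lra.
have [->|xs_neq0] := eqVneq xs 0; first by rewrite enorm0 subr_ge0.
have xs_gt0 := enorm_gt0 xs_neq0.
set u := (enorm xs)^-1 *: xs.
have u1 : enorm u = 1 by rewrite enormZ ger0_norm ?invr_ge0 ?enorm_ge0 // mulVf ?gt_eqF.
have /f_le : enorm (x + u) <= r + 1 by apply: le_trans (ler_enormD _ _) _; rewrite u1 lerD2r.
have := sg (x + u); rewrite addrAC subrr add0r dotvZr -enorm_sqr.
rewrite expr2 mulrA mulVf ?gt_eqF // mul1r; lra.
Qed.

Lemma convex_increment_le x d r r0 B : convex_fun f -> 0 < r0 ->
  enorm x <= r -> enorm d <= r0 ->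
  (forall y, enorm y <= r + r0 -> f y <= B) ->
  f (x + d) - f x <= enorm d / r0 * (B - f x).
Proof.
move=> f_cvx r0_gt0 x_le d_le f_le.
have [->|d_neq0] := eqVneq d 0; first by rewrite enorm0 !mul0r addr0 subrr.
have d_gt0 := enorm_gt0 d_neq0.
set th := enorm d / r0.
have th_gt0 : 0 < th by rewrite divr_gt0.
have th01 : 0 <= th <= 1 by rewrite ltW // ler_pdivrMr // mul1r.
set y := x + th^-1 *: d.
have /f_le fy_le : enorm y <= r + r0.
  apply: le_trans (ler_enormD _ _) _.
  by rewrite enormZ ger0_norm ?invr_ge0 ?(ltW th_gt0) // invf_div mulfVK ?gt_eqF ?lerD2r.
have -> : x + d = th *: y + (1 - th) *: x.
  by apply/matrixP => i j; rewrite !mxE; field; rewrite gt_eqF.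
have := f_cvx y x th th01; nra.
Qed.

End SubgradientBounds.

Definition bdist2 (R : realType) (n : nat) (f : 'cV[R]_n -> R) xs x (D : set 'cV[R]_n) : R :=
  inf [set r | exists2 y, D y & r = bregman f xs x y].

Section BregmanDistance.
Variables (R : realType) (n : nat) (f : 'cV[R]_n -> R) (alpha : R).
Hypotheses (alpha_gt0 : 0 < alpha) (f_sc : strongly_convex alpha f).
Implicit Types (x y z xs ys : 'cV[R]_n) (D : set 'cV[R]_n).

Lemma bregman_ge_sqr x xs z : subgrad f x xs ->
  alpha / 2 * enorm (z - x) ^+ 2 <= bregman f xs x z.
Proof. by case: f_sc => _ sc /(sc x z); rewrite /bregman; lra. Qed.

Lemma bregman_ge0 x xs z : subgrad f x xs -> 0 <= bregman f xs x z.
Proof.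
move/(bregman_ge_sqr z); apply: le_trans.
by rewrite mulr_ge0 ?sqr_ge0 ?divr_ge0 ?ltW.
Qed.

Lemma bregmanxx x xs : bregman f xs x x = 0.
Proof. by rewrite /bregman !subrr dotv0r subr0. Qed.

Lemma bregman_three_point xs x xs' x' z :
  bregman f xs x z - bregman f xs' x' z = bregman f xs x x' + dotv (xs' - xs) (z - x').
Proof. rewrite /bregman !dotvBr !dotvBl; ring. Qed.

Lemma bdist2_le x xs D y : subgrad f x xs -> D y -> bdist2 f xs x D <= bregman f xs x y.
Proof.
move=> sg Dy; apply: ge_inf; last by exists y.
by exists 0 => _ [z _ ->]; apply: bregman_ge0.
Qed.

Lemma bdist2_ge x xs D c y0 : D y0 -> (forall y, D y -> c <= bregman f xs x y) ->
  c <= bdist2 f xs x D.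
Proof.
move=> Dy0 c_le; apply: lb_le_inf => [|_ [y Dy ->]]; last exact: c_le.
by exists (bregman f xs x y0); exists y0.
Qed.

Lemma bdist2_ge0 x xs D : subgrad f x xs -> 0 <= bdist2 f xs x D.
Proof.
move=> sg; have [[y Dy]|D0] := pselect (D !=set0).
  by apply: (bdist2_ge Dy) => z _; apply: bregman_ge0.
rewrite /bdist2; suff -> : [set r | exists2 y, D y & r = bregman f xs x y] = set0.
  by rewrite inf0.
by apply/seteqP; split => // r [y Dy _]; apply: D0; exists y.
Qed.

Lemma sqr_bdist x xs D : subgrad f x xs -> bdist f xs x D ^+ 2 = bdist2 f xs x D.
Proof. by move=> sg; rewrite sqr_sqrtr // bdist2_ge0. Qed.

Lemma fconj_arg_le x0 xs0 ys y : subgrad f x0 xs0 ->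
  dotv ys y - f y <= dotv ys x0 - f x0 + enorm (ys - xs0) ^+ 2 / (2 * alpha).
Proof.
move=> sg0; have := bregman_ge_sqr y sg0; rewrite /bregman.
have -> : dotv ys y - f y =
    dotv ys x0 - f x0 + dotv (ys - xs0) (y - x0) - (f y - f x0 - dotv xs0 (y - x0)).
  by rewrite dotvBl !dotvBr; ring.
have := dotv_le (ys - xs0) (y - x0).
set a := enorm (ys - xs0); set b := enorm (y - x0) => ab_le sc_le.
have : 0 <= (a - alpha * b) ^+ 2 / (2 * alpha) by rewrite divr_ge0 ?sqr_ge0 ?mulr_ge0 ?ltW.
have -> : (a - alpha * b) ^+ 2 / (2 * alpha) = a ^+ 2 / (2 * alpha) - a * b + alpha / 2 * b ^+ 2.
  by field; rewrite gt_eqF.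
lra.
Qed.

Lemma fenchel_young x0 xs0 ys y : subgrad f x0 xs0 -> dotv ys y - f y <= fconj f ys.
Proof.
move=> sg0; apply: ub_le_sup; last by exists y.
exists (dotv ys x0 - f x0 + enorm (ys - xs0) ^+ 2 / (2 * alpha)) => _ [z ->].
exact: fconj_arg_le.
Qed.

Lemma fconj_subgrad x xs : subgrad f x xs -> fconj f xs = dotv xs x - f x.
Proof.
move=> sg; apply/eqP; rewrite eq_le (fenchel_young _ _ sg) andbT.
apply: ge_sup => [|_ [y ->]]; first by exists (dotv xs x - f x); exists x.
by have := sg y; rewrite dotvBr; lra.
Qed.

End BregmanDistance.

Section HalfspaceMinimizer.
Variables (R : realType) (n : nat) (g : 'cV[R]_n -> R) (a x' : 'cV[R]_n) (beta : R).
Hypotheses (g_cvx : convex_fun g) (ax' : dotv a x' = beta)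
  (x'_min : forall z, dotv a z <= beta -> g x' <= g z).

(* Compare [x'] with the point where the segment [z1, z2] crosses the hyperplane. *)
Lemma halfspace_min_slope_le z1 z2 : beta < dotv a z1 -> dotv a z2 < beta ->
  (g x' - g z1) / (dotv a z1 - beta) <= (g z2 - g x') / (beta - dotv a z2).
Proof.
set b1 := dotv a z1; set b2 := dotv a z2 => above below.
have b12_gt0 : 0 < b1 - b2 by lra.
rewrite ler_pdivrMr ?subr_gt0 // mulrAC ler_pdivlMr ?subr_gt0 //.
set th := (beta - b2) / (b1 - b2).
have th01 : 0 <= th <= 1 by rewrite divr_ge0 ?ler_pdivrMr /=; lra.
have /x'_min gx'_le : dotv a (th *: z1 + (1 - th) *: z2) <= beta.
  rewrite dotvDr !dotvZr -/b1 -/b2 le_eqVlt; apply/orP; left; apply/eqP.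
  by rewrite /th; field; rewrite gt_eqF.
have := le_trans gx'_le (g_cvx z1 z2 th01); rewrite -(ler_pM2r b12_gt0).
have -> : (th * g z1 + (1 - th) * g z2) * (b1 - b2) = (beta - b2) * g z1 + (b1 - beta) * g z2.
  by rewrite /th; field; rewrite gt_eqF.
nra.
Qed.

Lemma halfspace_min_multiplier : a != 0 ->
  exists lam, forall z, g x' + lam * beta <= g z + lam * dotv a z.
Proof.
move=> a_neq0; have aa_gt0 := dotvv_gt0 a_neq0.
pose S := [set r | exists2 z, beta < dotv a z & r = (g x' - g z) / (dotv a z - beta)].
have below : dotv a (x' - a) < beta by rewrite dotvBr ax' ltrBlDr ltrDl.
have above : beta < dotv a (x' + a) by rewrite dotvDr ax' ltrDl.
exists (sup S) => z.
have [z_below|z_above|z_on] := ltgtP (dotv a z) beta.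
- have : sup S <= (g z - g x') / (beta - dotv a z).
    apply: ge_sup => [|_ [z1 z1_above ->]]; last exact: halfspace_min_slope_le.
    by exists ((g x' - g (x' + a)) / (dotv a (x' + a) - beta)); exists (x' + a).
  by rewrite ler_pdivlMr ?subr_gt0 //; lra.
- have : (g x' - g z) / (dotv a z - beta) <= sup S.
    apply: ub_le_sup; last by exists z.
    exists ((g (x' - a) - g x') / (beta - dotv a (x' - a))) => _ [z1 z1_above ->].
    exact: halfspace_min_slope_le.
  by rewrite ler_pdivrMr ?subr_gt0 //; lra.
- by rewrite z_on lerD2r x'_min ?z_on.
Qed.

End HalfspaceMinimizer.

Section HalfspaceBregmanProjection.
Variables (R : realType) (n : nat) (f : 'cV[R]_n -> R) (alpha : R).
Hypotheses (alpha_gt0 : 0 < alpha) (f_sc : strongly_convex alpha f).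
Variables (xs x a x' : 'cV[R]_n) (beta : R).
Hypotheses (sg : subgrad f x xs) (x_out : beta < dotv a x)
  (x'_proj : is_bproj f xs x [set z | dotv a z <= beta] x').

Lemma bproj_halfspace_boundary : dotv a x' = beta.
Proof.
case: x'_proj => /= ax'_le x'_min; apply/eqP; rewrite eq_le ax'_le /= leNgt.
apply/negP => ax'_lt.
have d_gt0 : 0 < dotv a x - dotv a x' by move: x_out; lra.
set s := (beta - dotv a x') / (dotv a x - dotv a x').
have s_gt0 : 0 < s by rewrite divr_gt0 // subr_gt0.
have s_lt1 : s < 1 by rewrite ltr_pdivrMr // mul1r; move: x_out; lra.
set u := s *: x + (1 - s) *: x'.
have /x'_min : dotv a u <= beta.
  rewrite dotvDr !dotvZr le_eqVlt; apply/orP; left; apply/eqP.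
  by rewrite /s; field; rewrite gt_eqF.
have : bregman f xs x u <= (1 - s) * bregman f xs x x'.
  have := f_sc.1 x x' s; rewrite (ltW s_gt0) (ltW s_lt1) => /(_ isT).
  by rewrite /bregman /u !dotvBr !dotvDr !dotvZr -/u; nra.
have : 0 < bregman f xs x x'.
  apply: lt_le_trans (bregman_ge_sqr f_sc x' sg).
  rewrite mulr_gt0 ?divr_gt0 // exprn_gt0 // enorm_gt0 // subr_eq0.
  by apply: contraTneq ax'_lt => ->; rewrite -leNgt ltW.
nra.
Qed.

Lemma bproj_halfspace_multiplier : a != 0 -> exists lam, subgrad f x' (xs - lam *: a).
Proof.
move=> a_neq0; case: x'_proj => _ x'_min.
pose g z := f z - dotv xs z.
have g_cvx : convex_fun g.
  by move=> y z t /(f_sc.1 y z); rewrite /g dotvDr !dotvZr; lra.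
have x'_gmin z : dotv a z <= beta -> g x' <= g z.
  by move/x'_min; rewrite /bregman /g !dotvBr; lra.
have ax' := bproj_halfspace_boundary.
have [lam lam_le] := halfspace_min_multiplier g_cvx ax' x'_gmin a_neq0.
by exists lam => z; move: (lam_le z); rewrite /g !(dotvBl, dotvBr, dotvZl) ax'; lra.
Qed.

Lemma dual_step_subgrad t :
  (forall s, fconj f (xs - t *: a) + t * beta <= fconj f (xs - s *: a) + s * beta) ->
  [/\ subgrad f x' (xs - t *: a), 0 <= t & dotv a x' = beta].
Proof.
move=> t_min.
have ax' := bproj_halfspace_boundary.
have a_neq0 : a != 0.
  apply: contraTneq x_out => a0; case: x'_proj => /= + _.
  by rewrite a0 !dotv0l -leNgt.
have [lam sg_lam] := bproj_halfspace_multiplier a_neq0.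
have sg_t : subgrad f x' (xs - t *: a).
  move=> z; have := fenchel_young alpha_gt0 f_sc (xs - t *: a) z sg.
  have := t_min lam; rewrite (fconj_subgrad alpha_gt0 f_sc sg_lam).
  rewrite !(dotvBl, dotvBr, dotvZl) ax'; lra.
split => //; have := sg x'; have := sg_t x.
rewrite !(dotvBl, dotvBr, dotvZl) ax' => ? ?.
have : 0 <= t * (dotv a x - beta) by lra.
by rewrite pmulr_lge0 // subr_gt0.
Qed.

End HalfspaceBregmanProjection.

Section TupleSums.
Variables (R : realType) (T : finType).

Lemma big_tuple0 (F : 0.-tuple T -> R) : \sum_(t : 0.-tuple T) F t = F [tuple].
Proof. by rewrite (big_pred1 [tuple]) // => t; apply/esym/eqP; exact: tuple0. Qed.

Lemma big_tuple_cons k (F : k.+1.-tuple T -> R) :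
  \sum_(u : k.+1.-tuple T) F u = \sum_(x : T) \sum_(t : k.-tuple T) F [tuple of x :: t].
Proof.
rewrite pair_big /= (reindex (fun p : T * k.-tuple T => [tuple of p.1 :: p.2])) //=.
exists (fun u : k.+1.-tuple T => (thead u, [tuple of behead u])).
  by move=> [x t] _ /=; congr pair; apply: val_inj.
by move=> u _; rewrite [RHS]tuple_eta.
Qed.

Lemma big_tuple_rcons k (F : k.+1.-tuple T -> R) :
  \sum_(u : k.+1.-tuple T) F u = \sum_(t : k.-tuple T) \sum_(x : T) F [tuple of rcons t x].
Proof.
elim: k F => [|k IH] F.
  rewrite big_tuple_cons big_tuple0; apply: eq_bigr => x _.
  by rewrite big_tuple0; congr F; apply: val_inj.
rewrite !big_tuple_cons; apply: eq_bigr => x _.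
rewrite (IH (fun t => F [tuple of x :: t])); apply: eq_bigr => t _.
by apply: eq_bigr => y _; congr F; apply: val_inj.
Qed.

End TupleSums.

Section HistoryExpectation.
Variables (R : realType) (m : nat) (p : 'I_m -> R).
Hypotheses (p_gt0 : forall i, 0 < p i) (p_sum1 : \sum_i p i = 1).
Implicit Types (g : seq 'I_m -> R).

Lemma expect_hist_rcons k g :
  expect_hist p k.+1 g = expect_hist p k (fun h => \sum_i p i * g (rcons h i)).
Proof.
rewrite /expect_hist big_tuple_rcons; apply: eq_bigr => t _.
rewrite big_distrr; apply: eq_bigr => x _ /=.
have -> : \prod_(j < k.+1) p (tnth [tuple of rcons t x] j) = \prod_(y <- rcons t x) p y.
  by rewrite (big_tuple _ _ [tuple of rcons t x]).
by rewrite big_rcons /= -(big_tuple _ _ t (fun=> true) p); ring.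
Qed.

Lemma expect_hist1 k : expect_hist p k (fun=> 1) = 1.
Proof.
elim: k => [|k IH]; first by rewrite /expect_hist big_tuple0 big_ord0 mulr1.
rewrite expect_hist_rcons -[RHS]IH; congr expect_hist; apply: funext => h.
by under eq_bigr do rewrite mulr1.
Qed.

Lemma expect_histZ k g c : expect_hist p k (fun h => c * g h) = c * expect_hist p k g.
Proof. by rewrite /expect_hist mulr_sumr; apply: eq_bigr => h _; ring. Qed.

Lemma expect_histB k g1 g2 :
  expect_hist p k (fun h => g1 h - g2 h) = expect_hist p k g1 - expect_hist p k g2.
Proof. by rewrite /expect_hist -sumrB; apply: eq_bigr => h _; ring. Qed.

Lemma expect_hist_weight_ge0 k (h : k.-tuple 'I_m) : 0 <= \prod_(j < k) p (tnth h j).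
Proof. by apply: prodr_ge0 => j _; apply: ltW. Qed.

Lemma ler_expect_hist k g1 g2 : (forall h, g1 h <= g2 h) ->
  expect_hist p k g1 <= expect_hist p k g2.
Proof.
by move=> g12; apply: ler_sum => h _; rewrite ler_wpM2l ?expect_hist_weight_ge0.
Qed.

Lemma expect_hist_ge0 k g : (forall h, 0 <= g h) -> 0 <= expect_hist p k g.
Proof.
by move=> g_ge0; apply: sumr_ge0 => h _; rewrite mulr_ge0 ?expect_hist_weight_ge0.
Qed.

Lemma expect_hist_sqr_le k g : expect_hist p k g ^+ 2 <= expect_hist p k (fun h => g h ^+ 2).
Proof.
set E := expect_hist p k g.
have : 0 <= expect_hist p k (fun h => (g h - E) ^+ 2).
  by apply: expect_hist_ge0 => h; apply: sqr_ge0.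
have -> : (fun h => (g h - E) ^+ 2) = fun h => g h ^+ 2 - (2 * E * g h - E ^+ 2 * 1).
  by apply: funext => h; ring.
rewrite expect_histB (expect_histB _ (fun h => 2 * E * g h)) !expect_histZ expect_hist1.
rewrite -/E; lra.
Qed.

End HistoryExpectation.

Lemma finite_pos_lower_bound (R : realType) (I : finType) (q : I -> R) :
  (forall i, 0 < q i) -> exists2 c, 0 < c & forall i, c <= q i.
Proof.
move=> q_gt0; set S := 1 + \sum_i (q i)^-1.
have qV_le i : (q i)^-1 <= S.
  rewrite /S (bigD1 i) //= addrCA lerDl addr_ge0 ?sumr_ge0 // => j _.
  by rewrite invr_ge0 ltW.
have S_gt0 : 0 < S by rewrite ltr_pwDl ?sumr_ge0 // => j _; rewrite invr_ge0 ltW.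
exists S^-1 => [|i]; first by rewrite invr_gt0.
by rewrite -[q i]invrK lef_pV2 ?posrE ?invr_gt0.
Qed.

Lemma quadratic_decay_rate (R : realType) (u : nat -> R) :
  (forall k, 0 <= u k) -> (forall k, u k.+1 <= u k - u k ^+ 2) ->
  forall k, u k.+1 * k.+1%:R <= 1.
Proof.
move=> u_ge0 u_rec; elim => [|k IH].
  by have := u_rec 0%N; have := u_ge0 0%N; rewrite mulr1; nra.
have t_ge1 : 1 <= (k.+1%:R : R) by rewrite ler1n.
rewrite -natr1.
have := u_rec k.+1; have := u_ge0 k.+1; have := u_ge0 k.+2.
move: IH t_ge1; set t := (k.+1%:R : R); set v := u k.+1 => IH t_ge1 ? ? ?.
have v_le1 : v <= 1 by nra.
have : 0 <= (1 - v * t) * (1 - v) by apply: mulr_ge0; lra.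
have : u k.+2 * (t + 1) <= (v - v ^+ 2) * (t + 1) by rewrite ler_wpM2r //; lra.
nra.
Qed.

Section PreimageDistance.
Variables (R : realType) (n k : nat) (A : 'M[R]_(k, n)) (Q : set 'cV[R]_k).
Implicit Types (x z : 'cV[R]_n) (p : 'cV[R]_k).

(* [C_i] is contained in the halfspace [H_k] of RBPSFP. *)
Lemma orth_proj_preimage_halfspace x p z : cvx_set Q -> is_orth_proj Q (A *m x) p ->
  Q (A *m z) ->
  dotv (A^T *m (A *m x - p)) z <= dotv (A^T *m (A *m x - p)) x - enorm (A *m x - p) ^+ 2.
Proof.
move=> cvxQ p_proj /(orth_proj_obtuse cvxQ p_proj).
have adj v : dotv (A^T *m (A *m x - p)) v = dotv (A *m x - p) (A *m v).
  by rewrite dotvC -dotv_mulmx dotvC.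
rewrite !adj enorm_sqr; set Ax := A *m x; set Az := A *m z.
by rewrite !(dotvBl, dotvBr) (dotvC p Ax); lra.
Qed.

Lemma dist_preimage_le_dist_range : (exists z, Q (A *m z)) ->
  exists2 N, 0 < N & forall x, euc_dist x [set z | Q (A *m z)] <=
    N * euc_dist (A *m x) [set y | forall b : bool, (if b then Q else mxrange A) y].
Proof.
move=> [z0 Qz0]; have [NP NP_ge0 NP_bound] := enorm_mulmx_bounded (pinvmx A^T)^T.
exists (NP + 1) => [|x]; first lra.
rewrite mulrC -ler_pdivrMr; last lra.
apply: lb_le_inf => [|_ [y QRy ->]].
  by exists (enorm (A *m x - A *m z0)); exists (A *m z0) => // [[]] //; exists z0.
have [u Au] : mxrange A y := QRy false.
set d := (pinvmx A^T)^T *m (A *m (u - x)).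
have Cxd : [set z | Q (A *m z)] (x + d).
  by rewrite /= mulmxDr mulmx_trpinv mulmxBr -Au addrC subrK; exact: QRy true.
have := euc_dist_le x Cxd; rewrite opprD addNKr enormN => dist_le.
have : enorm d <= NP * enorm (A *m x - y).
  by rewrite enorm_distC Au -mulmxBr; exact: NP_bound.
rewrite ler_pdivrMr; last lra.
have := enorm_ge0 (A *m x - y); have := enorm_ge0 d; nra.
Qed.

Lemma regular_pair_dist_le (D : bool -> set 'cV[R]_k) (rho : R) :
  bdd_lin_regular D -> 0 < rho ->
  exists2 K, 0 <= K & forall y, enorm y <= rho -> D false y ->
    euc_dist y [set z | forall b, D b z] <= K * euc_dist y (D true).
Proof.
move=> /(_ rho) D_reg /D_reg [g g_gt0 g_reg]; exists (Num.sqrt g) => // y y_le Dy.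
have := g_reg y y_le; rewrite big_bool (euc_dist_eq0 Dy) [0 ^+ 2]expr2 mul0r Monoid.mulm1.
have -> : g * euc_dist y (D true) ^+ 2 = (Num.sqrt g * euc_dist y (D true)) ^+ 2.
  by rewrite exprMn sqr_sqrtr ?ltW.
by rewrite ler_pXn2r // nnegrE ?mulr_ge0 ?sqrtr_ge0 ?euc_dist_ge0.
Qed.

Lemma dist_preimage_le_residual rho : (exists z, Q (A *m z)) ->
  bdd_lin_regular (fun b : bool => if b then Q else mxrange A) -> 0 < rho ->
  exists2 K, 0 <= K & forall x p, enorm x <= rho -> is_orth_proj Q (A *m x) p ->
    euc_dist x [set z | Q (A *m z)] <= K * enorm (A *m x - p).
Proof.
move=> Qne QR_reg rho_gt0.
have [N N_gt0 N_le] := dist_preimage_le_dist_range Qne.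
have [NA NA_ge0 NA_le] := enorm_mulmx_bounded A.
have [|K K_ge0 K_le] := @regular_pair_dist_le _ (NA * rho + 1) QR_reg.
  by have := mulr_ge0 NA_ge0 (ltW rho_gt0); lra.
exists (N * K) => [|x p x_le p_proj]; first exact: mulr_ge0 (ltW N_gt0) K_ge0.
apply: le_trans (N_le x) _; rewrite -mulrA ler_pM2l // -(euc_dist_orth_proj p_proj).
apply: K_le; last by exists x.
by apply: le_trans (NA_le x) _; have := ler_wpM2l NA_ge0 x_le; lra.
Qed.

End PreimageDistance.

Section RBPSFPStep.
Variables (R : realType) (n m : nat) (f : 'cV[R]_n -> R) (alpha : R).
Hypotheses (alpha_gt0 : 0 < alpha) (f_sc : strongly_convex alpha f).
Variables (C : 'I_m -> set 'cV[R]_n) (isQ : 'I_m -> bool) (mi : 'I_m -> nat).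
Variables (A : forall i, 'M[R]_(mi i, n)) (Q : forall i, set 'cV[R]_(mi i)).
Arguments Q : clear implicits.
Hypothesis hQ : forall i, isQ i -> [/\ closed (Q i), cvx_set (Q i), Q i !=set0
                                    & C i = [set x | Q i (A i *m x)]].
Implicit Types (x xs z : 'cV[R]_n).

Lemma rbpsfp_step_descent i x xs x' xs' : subgrad f x xs ->
  rbpsfp_step f isQ C A Q i x xs x' xs' ->
  subgrad f x' xs' /\
  forall z, C i z -> bregman f xs' x' z <= bregman f xs x z - bregman f xs x x'.
Proof.
move=> sg; rewrite /rbpsfp_step; case: ifPn => [_ [x'_proj [sg' adm]]|/negPn isQi].
  split=> [//|z Cz]; have := bregman_three_point f xs x xs' x' z; have := adm z Cz; lra.
have [_ cvxQ _ CiE] := hQ isQi.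
move=> [p p_proj [w0 w_proj]]; set w := A i *m x - p in w0 w_proj.
have [/w0[-> ->]|/eqP w_neq0] := eqVneq w 0.
  by split=> // z _; rewrite bregmanxx subr0.
have /= [x'_proj [t -> t_min]] := w_proj w_neq0.
set a := (A i)^T *m w in x'_proj t_min *.
have x_out : dotv a x - enorm w ^+ 2 < dotv a x.
  by rewrite ltrBlDr ltrDl exprn_gt0 ?enorm_gt0 //; exact/eqP.
have [sg' t_ge0 ax'] := dual_step_subgrad alpha_gt0 f_sc sg x_out x'_proj t_min.
split=> [//|z]; rewrite CiE => /(orth_proj_preimage_halfspace cvxQ p_proj) z_in.
have := bregman_three_point f xs x (xs - t *: a) x' z.
rewrite (_ : xs - t *: a - xs = - (t *: a)); last by rewrite addrAC subrr add0r.
rewrite dotvNl dotvZl dotvBr ax'.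
have : 0 <= t * (dotv a x - enorm w ^+ 2 - dotv a z) by rewrite mulr_ge0 // subr_ge0.
lra.
Qed.

Hypothesis hregQ : forall i, isQ i ->
  bdd_lin_regular (fun b : bool => if b then Q i else mxrange (A i)).
Hypothesis C_ne : exists z, forall i, C i z.

Lemma rbpsfp_step_dist_index i rho : 0 < rho -> exists2 K, 0 < K &
  forall x xs x' xs', rbpsfp_step f isQ C A Q i x xs x' xs' -> enorm x <= rho ->
    euc_dist x (C i) <= K * enorm (x - x').
Proof.
move=> rho_gt0; rewrite /rbpsfp_step; case: (boolP (isQ i)) => /= [isQi|_]; last first.
  by exists 1 => // x xs x' xs' [[Cx' _] _] _; rewrite mul1r euc_dist_le.
have [_ _ _ CiE] := hQ isQi.
have [z0 Cz0] := C_ne.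
have Qne : exists z, Q i (A i *m z) by exists z0; move: (Cz0 i); rewrite CiE.
have [K0 K0_ge0 K0_le] := dist_preimage_le_residual Qne (hregQ isQi) rho_gt0.
have [N N_ge0 N_le] := enorm_mulmx_bounded (A i)^T.
have K_ge0 : 0 <= K0 * N by rewrite mulr_ge0.
exists (K0 * N + 1) => [|x xs x' xs' [p p_proj [_ w_proj]] x_le]; first lra.
rewrite CiE; set w := A i *m x - p in w_proj.
have [w_eq0|/eqP w_neq0] := eqVneq w 0.
  have Cx : [set z | Q i (A i *m z)] x.
    rewrite /= (_ : A i *m x = p); first by case: p_proj.
    by apply/eqP; rewrite -subr_eq0 -/w w_eq0.
  by rewrite (euc_dist_eq0 Cx) mulr_ge0 ?enorm_ge0 // addr_ge0.
have [[/= ax'_le _] _] := w_proj w_neq0.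
have w_le : enorm w <= N * enorm (x - x').
  have w_gt0 : 0 < enorm w by apply: enorm_gt0; exact/eqP.
  rewrite -(ler_pM2l w_gt0) -expr2 mulrA [enorm w * N]mulrC.
  apply: le_trans _ (ler_wpM2r (enorm_ge0 _) (N_le w)).
  by apply: le_trans _ (dotv_le _ _); rewrite dotvBr; lra.
apply: le_trans (K0_le x p x_le p_proj) _.
have := ler_wpM2l K0_ge0 w_le; have := enorm_ge0 (x - x'); nra.
Qed.

Lemma rbpsfp_step_dist rho : 0 < rho -> exists2 K, 0 < K &
  forall i x xs x' xs', rbpsfp_step f isQ C A Q i x xs x' xs' -> enorm x <= rho ->
    euc_dist x (C i) <= K * enorm (x - x').
Proof.
move=> rho_gt0.
have /choice[K K_spec] : forall i, exists K, 0 < K /\ forall x xs x' xs',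
    rbpsfp_step f isQ C A Q i x xs x' xs' -> enorm x <= rho ->
    euc_dist x (C i) <= K * enorm (x - x').
  by move=> i; have [K ? ?] := rbpsfp_step_dist_index i rho_gt0; exists K.
have K_ge0 i : 0 <= K i by exact: ltW (K_spec i).1.
exists (1 + \sum_i K i) => [|i x xs x' xs' step x_le]; first by rewrite ltr_pwDl ?sumr_ge0.
apply: le_trans ((K_spec i).2 _ _ _ _ step x_le) _.
by rewrite ler_wpM2r ?enorm_ge0 // (bigD1 i) //= addrCA lerDl addr_ge0 ?sumr_ge0.
Qed.

End RBPSFPStep.

Section RBPSFPIterates.
Variables (R : realType) (n m : nat) (f : 'cV[R]_n -> R) (alpha : R).
Hypotheses (alpha_gt0 : 0 < alpha) (f_sc : strongly_convex alpha f).
Variables (C : 'I_m -> set 'cV[R]_n) (isQ : 'I_m -> bool) (mi : 'I_m -> nat).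
Variables (A : forall i, 'M[R]_(mi i, n)) (Q : forall i, set 'cV[R]_(mi i)).
Arguments Q : clear implicits.
Hypothesis hQ : forall i, isQ i -> [/\ closed (Q i), cvx_set (Q i), Q i !=set0
                                    & C i = [set x | Q i (A i *m x)]].
Hypothesis hregQ : forall i, isQ i ->
  bdd_lin_regular (fun b : bool => if b then Q i else mxrange (A i)).
Hypotheses (C_ne : exists z, forall i, C i z) (C_reg : bdd_lin_regular C).
Variables (X Xs : seq 'I_m -> 'cV[R]_n).
Hypothesis X0_sg : subgrad f (X [::]) (Xs [::]).
Hypothesis X_step : forall h i,
  rbpsfp_step f isQ C A Q i (X h) (Xs h) (X (rcons h i)) (Xs (rcons h i)).

Let Cap := [set x | forall i, C i x].
(* [bd2 h] is [dist_f^{x*_k}(x_k, C)^2] for the iterate reached along the history [h]. *)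
Let bd2 h := bdist2 f (Xs h) (X h) Cap.

Lemma iterate_subgrad h : subgrad f (X h) (Xs h).
Proof.
elim/last_ind: h => [//|h i sg].
exact: (rbpsfp_step_descent alpha_gt0 f_sc hQ sg (X_step h i)).1.
Qed.

Lemma iterate_descent h i z : C i z ->
  bregman f (Xs (rcons h i)) (X (rcons h i)) z <=
    bregman f (Xs h) (X h) z - bregman f (Xs h) (X h) (X (rcons h i)).
Proof. exact: (rbpsfp_step_descent alpha_gt0 f_sc hQ (iterate_subgrad h) (X_step h i)).2. Qed.

Lemma bregman_iterate_le_init h z : Cap z ->
  bregman f (Xs h) (X h) z <= bregman f (Xs [::]) (X [::]) z.
Proof.
move=> Cz; elim/last_ind: h => [//|h i IH]; apply: le_trans IH.
have := iterate_descent h (Cz i).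
have := bregman_ge0 alpha_gt0 f_sc (X (rcons h i)) (iterate_subgrad h); lra.
Qed.

Lemma iterate_bounded : exists2 r, 0 < r & forall h, enorm (X h) <= r.
Proof.
have [z0 Cz0] := C_ne; set B0 := bregman f (Xs [::]) (X [::]) z0.
exists (enorm z0 + Num.sqrt (2 * B0 / alpha) + 1) => [|h].
  by rewrite ltr_pwDr ?addr_ge0 ?enorm_ge0 ?sqrtr_ge0.
have : enorm (z0 - X h) ^+ 2 <= 2 * B0 / alpha.
  rewrite ler_pdivlMr // mulrC.
  have := bregman_ge_sqr f_sc z0 (iterate_subgrad h).
  have := bregman_iterate_le_init h Cz0; rewrite -/B0; lra.
move=> /ler_wsqrtr; rewrite sqrtr_sqr ger0_norm ?enorm_ge0 // => dist_le.
have : enorm (X h) <= enorm z0 + enorm (z0 - X h).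
  rewrite [X in enorm X <= _](_ : _ = z0 - (z0 - X h)); last by rewrite opprB addrC subrK.
  by apply: le_trans (ler_enormD _ _) _; rewrite enormN.
lra.
Qed.

Lemma f_iterate_lower_bound r : (forall h, enorm (X h) <= r) ->
  exists m0, forall h, m0 <= f (X h).
Proof.
move=> X_le; exists (f (X [::]) - enorm (Xs [::]) * (r + enorm (X [::]))) => h.
apply: le_trans (subgrad_lower_bound (X h) X0_sg); rewrite lerB // ler_wpM2l ?enorm_ge0 //.
by rewrite lerD2r.
Qed.

Lemma dual_iterate_bounded : exists G, forall h, enorm (Xs h) <= G.
Proof.
have [r r_gt0 X_le] := iterate_bounded.
have [B f_le] := convex_bounded_above f_sc.1 (r + 1).
have [m0 m0_le] := f_iterate_lower_bound X_le.
exists (B - m0) => h; apply: le_trans (subgrad_enorm_le (iterate_subgrad h) (X_le h) f_le) _.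
by rewrite lerB.
Qed.

Lemma bd2_ge0 h : 0 <= bd2 h.
Proof. by rewrite /bd2 (bdist2_ge0 alpha_gt0 f_sc Cap (iterate_subgrad h)). Qed.

Lemma bd2_step h i : bd2 (rcons h i) + alpha / 2 * enorm (X h - X (rcons h i)) ^+ 2 <= bd2 h.
Proof.
have [z0 Cz0] := C_ne; apply: (bdist2_ge Cz0) => z Cz.
have := bdist2_le alpha_gt0 f_sc (iterate_subgrad (rcons h i)) Cz.
have := iterate_descent h (Cz i).
have := bregman_ge_sqr f_sc (X (rcons h i)) (iterate_subgrad h).
rewrite enorm_distC /bd2; lra.
Qed.

Lemma dist_sqr_le_bd2 h : alpha / 2 * euc_dist (X h) Cap ^+ 2 <= bd2 h.
Proof.
have [z0 Cz0] := C_ne; apply: (bdist2_ge Cz0) => z Cz.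
apply: le_trans (bregman_ge_sqr f_sc z (iterate_subgrad h)).
apply: ler_wpM2l; first by rewrite divr_ge0 ?ltW.
rewrite ler_pXn2r ?nnegrE ?euc_dist_ge0 ?enorm_ge0 //.
by rewrite enorm_distC euc_dist_le.
Qed.

Lemma bregman_iterate_le_dist r0 : 0 < r0 -> exists2 L, 0 < L &
  forall h z, enorm (z - X h) <= r0 -> bregman f (Xs h) (X h) z <= L * enorm (z - X h).
Proof.
move=> r0_gt0; have [r r_gt0 X_le] := iterate_bounded.
have [G G_le] := dual_iterate_bounded.
have [B f_le] := convex_bounded_above f_sc.1 (r + r0).
have [m0 m0_le] := f_iterate_lower_bound X_le.
set L := `|B - m0| / r0 + `|G|.
have L_ge0 : 0 <= L by rewrite /L addr_ge0 // divr_ge0 // ltW.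
exists (L + 1) => [|h z z_le]; first lra.
apply: le_trans (_ : _ <= L * enorm (z - X h)) _; last by rewrite ler_wpM2r ?enorm_ge0 ?lerDl.
have := convex_increment_le f_sc.1 r0_gt0 (X_le h) z_le f_le; rewrite [X h + _]addrC subrK.
have : enorm (z - X h) / r0 * (B - f (X h)) <= enorm (z - X h) / r0 * `|B - m0|.
  apply: ler_wpM2l; first by rewrite divr_ge0 ?enorm_ge0 ?ltW.
  by apply: le_trans (ler_norm _); rewrite lerD2l lerN2.
have := normr_dotv_le (Xs h) (z - X h); rewrite ler_norml => /andP[dot_ge _].
have : enorm (Xs h) * enorm (z - X h) <= `|G| * enorm (z - X h).
  by rewrite ler_wpM2r ?enorm_ge0 // (le_trans (G_le h) (ler_norm _)).
rewrite /bregman /L mulrDl mulrAC; lra.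
Qed.

Lemma bd2_le_dist : exists2 L, 0 < L & forall h, bd2 h <= L * euc_dist (X h) Cap.
Proof.
have [z0 Cz0] := C_ne; have [r r_gt0 X_le] := iterate_bounded.
have [|L L_gt0 L_bound] := @bregman_iterate_le_dist (r + enorm z0 + 1).
  by have := enorm_ge0 z0; lra.
exists L => // h; apply/ler_addgt0Pr => e e_gt0.
set e' := Num.min (e / L) 1.
have e'_gt0 : 0 < e' by rewrite lt_min ltr01 divr_gt0.
have Cap_ne : Cap !=set0 by exists z0.
have [z Cz z_near] := euc_dist_approx (X h) Cap_ne e'_gt0.
have dist_le : euc_dist (X h) Cap <= r + enorm z0.
  apply: le_trans (euc_dist_le _ Cz0) _; apply: le_trans (ler_enormD _ _) _.
  by rewrite enormN lerD2r.
have e'_le1 : e' <= 1 by rewrite ge_min lexx orbT.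
have Le'_le : e' * L <= e by rewrite -ler_pdivlMr // ge_min lexx.
have /L_bound : enorm (z - X h) <= r + enorm z0 + 1 by rewrite enorm_distC; lra.
have := bdist2_le alpha_gt0 f_sc (iterate_subgrad h) Cz.
rewrite enorm_distC -/(bd2 h) => bd2_le breg_le.
have := ler_wpM2l (ltW L_gt0) (ltW z_near); rewrite mulrDr; nra.
Qed.

Variable p : 'I_m -> R.
Hypotheses (p_gt0 : forall i, 0 < p i) (p_sum1 : \sum_i p i = 1).

(* Bounded linear regularity turns the step lengths into the distance to [Cap]. *)
Lemma mean_bd2_step : exists2 c, 0 < c & forall h,
  \sum_i p i * bd2 (rcons h i) <= bd2 h - c * euc_dist (X h) Cap ^+ 2.
Proof.
have [r r_gt0 X_le] := iterate_bounded.
have [K K_gt0 K_le] := rbpsfp_step_dist f hQ hregQ C_ne r_gt0.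
have [g g_gt0 g_reg] := C_reg r_gt0.
have [pm pm_gt0 pm_le] := finite_pos_lower_bound p_gt0.
set c := alpha / (2 * K ^+ 2).
have c_gt0 : 0 < c by rewrite divr_gt0 // mulr_gt0 // exprn_gt0.
exists (c * pm / g) => [|h]; first by rewrite !divr_gt0 // mulr_gt0.
have step_i i :
    p i * bd2 (rcons h i) <= p i * bd2 h - c * (p i * euc_dist (X h) (C i) ^+ 2).
  have : c * euc_dist (X h) (C i) ^+ 2 <= alpha / 2 * enorm (X h - X (rcons h i)) ^+ 2.
    rewrite (_ : alpha / 2 = c * K ^+ 2); last by rewrite /c; field; rewrite gt_eqF.
    rewrite -mulrA; apply: ler_wpM2l; first exact: ltW.
    rewrite -exprMn ler_pXn2r ?nnegrE ?euc_dist_ge0 //.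
      exact: K_le (X_step h i) (X_le h).
    by rewrite mulr_ge0 ?enorm_ge0 // ltW.
  have := bd2_step h i => step_le dist_le.
  have : c * euc_dist (X h) (C i) ^+ 2 <= bd2 h - bd2 (rcons h i) by lra.
  by move/(ler_wpM2l (ltW (p_gt0 i))); rewrite mulrBr mulrCA; lra.
apply: le_trans (ler_sum _ (fun i _ => step_i i)) _.
rewrite sumrB -mulr_suml p_sum1 mul1r -mulr_sumr lerD2l lerN2.
rewrite (_ : c * pm / g * _ = c * (pm * (euc_dist (X h) Cap ^+ 2 / g))); last by ring.
apply: ler_wpM2l; first exact: ltW.
apply: le_trans (_ : pm * \sum_i euc_dist (X h) (C i) ^+ 2 <= _).
  by apply: ler_wpM2l; [exact: ltW | rewrite ler_pdivrMr // mulrC g_reg].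
by rewrite mulr_sumr; apply: ler_sum => i _; rewrite ler_wpM2r ?sqr_ge0.
Qed.

Let a k := expect_hist p k bd2.

Lemma expect_bd2_rec : exists2 c, 0 < c & forall k, a k.+1 <= a k - c * a k ^+ 2.
Proof.
have [c1 c1_gt0 c1_le] := mean_bd2_step.
have [L L_gt0 L_le] := bd2_le_dist.
exists (c1 / L ^+ 2) => [|k]; first by rewrite divr_gt0 // exprn_gt0.
rewrite /a expect_hist_rcons; apply: le_trans (ler_expect_hist p_gt0 k c1_le) _.
rewrite expect_histB expect_histZ lerD2l lerN2.
have : expect_hist p k (fun h => L^-1 * bd2 h) ^+ 2 <=
    expect_hist p k (fun h => euc_dist (X h) Cap ^+ 2).
  apply: le_trans (expect_hist_sqr_le p_gt0 p_sum1 k _) (ler_expect_hist p_gt0 k _) => h.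
  rewrite ler_pXn2r ?nnegrE ?euc_dist_ge0 ?mulr_ge0 ?invr_ge0 ?bd2_ge0 ?(ltW L_gt0) //.
  by rewrite ler_pdivrMl.
rewrite expect_histZ -/(a k) => Ea_le.
rewrite (_ : c1 / L ^+ 2 * _ = c1 * (L^-1 * a k) ^+ 2); last by rewrite exprMn exprVn; ring.
by apply: ler_wpM2l; first exact: ltW.
Qed.

Lemma expect_bd2_le : exists2 c, 0 < c & forall k, a k.+1 <= (c * k.+1%:R)^-1.
Proof.
have [c c_gt0 a_rec] := expect_bd2_rec.
have a_ge0 k : 0 <= a k by apply: (expect_hist_ge0 p_gt0) => h; apply: bd2_ge0.
have ca_rec k : c * a k.+1 <= c * a k - (c * a k) ^+ 2.
  by have := ler_wpM2l (ltW c_gt0) (a_rec k); rewrite mulrBr exprMn expr2 mulrA.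
have ca_ge0 k : 0 <= c * a k by rewrite mulr_ge0 // ltW.
exists c => // k; have := quadratic_decay_rate ca_ge0 ca_rec k.
by rewrite -div1r ler_pdivlMr ?mulr_gt0 ?ltr0n // mulrA [a _ * c]mulrC.
Qed.

Lemma iterates_bounded : exists M, forall h, enorm (X h) <= M /\ enorm (Xs h) <= M.
Proof.
have [r _ X_le] := iterate_bounded; have [G G_le] := dual_iterate_bounded.
exists (Num.max r G) => h; rewrite !le_max X_le G_le orbT //.
Qed.

Lemma bdist_iterate_nonincreasing h i :
  bdist f (Xs (rcons h i)) (X (rcons h i)) Cap <= bdist f (Xs h) (X h) Cap.
Proof.
apply: ler_wsqrtr; have := bd2_step h i; rewrite /bd2 /bdist2.
have : 0 <= alpha / 2 * enorm (X h - X (rcons h i)) ^+ 2.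
  by rewrite mulr_ge0 ?sqr_ge0 // divr_ge0 // ltW.
lra.
Qed.

Lemma expect_bdist_cvg0 :
  (fun k => expect_hist p k (fun h => bdist f (Xs h) (X h) Cap ^+ 2)) @ \oo --> (0 : R).
Proof.
have -> : (fun k => expect_hist p k (fun h => bdist f (Xs h) (X h) Cap ^+ 2)) = a.
  apply/funext => k; congr expect_hist; apply/funext => h.
  by rewrite (sqr_bdist alpha_gt0 f_sc Cap (iterate_subgrad h)).
have [c c_gt0 a_le] := expect_bd2_le.
rewrite -cvg_shiftS; apply: (@squeeze_cvgr _ _ _ _ (fun=> 0) (fun k => c^-1 * harmonic k)).
- apply: nearW => k /=; rewrite (expect_hist_ge0 p_gt0) => [|h]; last exact: bd2_ge0.
  by rewrite -invfM; exact: a_le.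
- exact: cvg_cst.
- by rewrite -(mulr0 c^-1); apply: cvgMl_tmp; exact: cvg_harmonic.
Qed.

Lemma expect_dist_rate : exists2 c, 0 < c & forall k, (1 <= k)%N ->
  expect_hist p k (fun h => euc_dist (X h) Cap) <= c / Num.sqrt k%:R.
Proof.
have [c c_gt0 a_le] := expect_bd2_le.
exists (Num.sqrt (2 / (alpha * c))) => [|[//|k] _].
  by rewrite sqrtr_gt0 divr_gt0 ?mulr_gt0.
set E := expect_hist p k.+1 _.
have E_ge0 : 0 <= E by apply: (expect_hist_ge0 p_gt0) => h; apply: euc_dist_ge0.
have E2_le : E ^+ 2 <= 2 / (alpha * c) / k.+1%:R.
  apply: le_trans (expect_hist_sqr_le p_gt0 p_sum1 _ _) _.
  apply: le_trans (_ : _ <= expect_hist p k.+1 (fun h => 2 / alpha * bd2 h)) _.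
    apply: (ler_expect_hist p_gt0) => h.
    move: (dist_sqr_le_bd2 h) => /(ler_wpM2l (_ : 0 <= 2 / alpha)).
    rewrite mulrA (_ : 2 / alpha * (alpha / 2) = 1) ?mul1r; last by field; rewrite gt_eqF.
    by apply; rewrite divr_ge0 ?ltW.
  rewrite expect_histZ -/(a k.+1); apply: le_trans (ler_wpM2l _ (a_le k)) _.
    by rewrite divr_ge0 ?ltW.
  rewrite le_eqVlt; apply/orP; left; apply/eqP.
  by rewrite invfM; field; rewrite !gt_eqF ?ltr0n.
rewrite -[E]ger0_norm // -sqrtr_sqr -sqrtrV ?ler0n // -sqrtrM; first exact: ler_wsqrtr.
by rewrite divr_ge0 // mulr_ge0 // ltW.
Qed.

End RBPSFPIterates.

Theorem theorem4p2 (R : realType) (n m : nat) (f : 'cV[R]_n -> R) (alpha : R)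
  (halpha : 0 < alpha) (hf : strongly_convex alpha f)
  (C : 'I_m -> set 'cV[R]_n)
  (hCcl : forall i, closed (C i)) (hCcv : forall i, cvx_set (C i))
  (hCne : exists x, forall i, C i x)
  (isQ : 'I_m -> bool) (mi : 'I_m -> nat)
  (A : forall i, 'M[R]_(mi i, n)) (Q : forall i, set 'cV[R]_(mi i))
  (hQ : forall i, isQ i -> [/\ closed (Q i), cvx_set (Q i), Q i !=set0
                             & C i = [set x | Q i (A i *m x)]])
  (hreg : bdd_lin_regular C)
  (hregQ : forall i, isQ i ->
     bdd_lin_regular (fun b : bool => if b then Q i else mxrange (A i)))
  (p : 'I_m -> R) (hp : forall i, 0 < p i) (hp1 : \sum_i p i = 1)
  (X Xs : seq 'I_m -> 'cV[R]_n)
  (hX0 : subgrad f (X [::]) (Xs [::]))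
  (hstep : forall h i, rbpsfp_step f isQ C A Q i (X h) (Xs h) (X (rcons h i)) (Xs (rcons h i))) :
  let Cap := [set x | forall i, C i x] in
  [/\ (forall omega : nat -> 'I_m, exists M : R, forall k,
         enorm (X (mkseq omega k)) <= M /\ enorm (Xs (mkseq omega k)) <= M),
      (forall h i, bdist f (Xs (rcons h i)) (X (rcons h i)) Cap <= bdist f (Xs h) (X h) Cap),
      (fun k => expect_hist p k (fun h => bdist f (Xs h) (X h) Cap ^+ 2)) @ \oo --> (0 : R)
    & exists2 c : R, 0 < c & forall k : nat, (1 <= k)%N ->
        expect_hist p k (fun h => euc_dist (X h) Cap) <= c / Num.sqrt (k%:R)].
Proof.
move=> Cap; split.
- move=> omega; have [M XXs_le] := iterates_bounded halpha hf hQ hCne hX0 hstep.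
  by exists M => k; exact: XXs_le.
- exact: (bdist_iterate_nonincreasing halpha hf hQ hCne hX0 hstep).
- exact: (expect_bdist_cvg0 halpha hf hQ hregQ hCne hreg hX0 hstep hp hp1).
- exact: (expect_dist_rate halpha hf hQ hregQ hCne hreg hX0 hstep hp hp1).
Qed.
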